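(* For any simple undirected graph $G$ with $m$ edges, $$\Phi_1=\sum_{\{st,uv\}\in Q}(k_sk_t+k_uk_v)=(m+1)\psi-\sum_{st\in E}k_sk_t(k_s+k_t).$$
   Context: $k_x$ is the degree of $x$, $\psi=\sum_{st\in E}k_sk_t$. $Q$ is the set of unordered pairs $\{st,uv\}$ of edges with $s,t,u,v$ pairwise distinct. *)

From mathcomp Require Import all_boot all_order all_algebra.
Set Implicit Arguments. Unset Strict Implicit. Unset Printing Implicit Defensive.

(* A simple undirected graph on a finite vertex type T is given by a
   symmetric, irreflexive adjacency relation g : rel T. *)
Section Graph.
Variables (T : finType) (g : rel T).

Definition edges : {set {set T}} :=
  [set e : {set T} | [exists s, exists t, g s t && (e == [set s; t])]].

Definition nedges : nat := #|edges|.

Definition deg (x : T) : nat := #|[set y | g x y]|.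

Definition edge_prod (e : {set T}) : nat := \prod_(x in e) deg x.

Definition edge_sum (e : {set T}) : nat := \sum_(x in e) deg x.

Definition psi : nat := \sum_(e in edges) edge_prod e.

(* Q : unordered pairs {st, uv} of edges with s,t,u,v pairwise distinct,
   i.e. pairs of vertex-disjoint edges *)
Definition Qpairs : {set {set {set T}}} :=
  [set p : {set {set T}} | [exists e in edges, exists f in edges,
     (e :&: f == set0) && (p == [set e; f])]].

Definition Phi1 : nat := \sum_(p in Qpairs) \sum_(e in p) edge_prod e.

End Graph.

From mathcomp Require Import all_boot all_order all_algebra.
Set Implicit Arguments. Unset Strict Implicit. Unset Printing Implicit Defensive.

(* Double counting: each edge e = {s,t} occurs in Q once for every edge
   disjoint from it, and exactly k_s + k_t - 1 edges meet e (e itself being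
   counted at both endpoints).  Hence
   Phi_1 = sum_e (m + 1 - (k_s + k_t)) k_s k_t, which is the claim. *)

Lemma sum_over_family_members (X : finType) (E : {set X}) (P : {set {set X}})
    (F : X -> nat) :
  {in P, forall p : {set X}, p \subset E} ->
  \sum_(p in P) \sum_(x in p) F x = \sum_(x in E) #|[set p in P | x \in p]| * F x.
Proof.
move=> subPE.
transitivity (\sum_(p in P) \sum_(x in E | x \in p) F x).
  apply: eq_bigr => p Pp; apply: eq_bigl => x.
  by case: (boolP (x \in p)) => [/(subsetP (subPE p Pp)) ->|]; rewrite ?andbF.
rewrite (exchange_big_dep (mem E)) /=; last by move=> p x _ /andP[].
apply: eq_bigr => x Ex; rewrite -sum_nat_const.
by apply: eq_bigl => p; rewrite inE Ex.
Qed.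

Section Counting.
Variables (T : finType) (g : rel T).
Hypotheses (gsym : symmetric g) (girr : irreflexive g).

Definition incident_edges (s : T) : {set {set T}} := [set e in edges g | s \in e].

Definition disjoint_edges (e : {set T}) : {set {set T}} :=
  [set f in edges g | e :&: f == set0].

Lemma edgeP e : reflect (exists s t, g s t /\ e = [set s; t]) (e \in edges g).
Proof.
rewrite inE; apply: (iffP existsP) => [[s /existsP[t /andP[gst /eqP->]]]|].
  by exists s, t.
by case=> s [t [gst ->]]; exists s; apply/existsP; exists t; rewrite gst eqxx.
Qed.

Lemma QpairsP p :
  reflect (exists e f, [/\ e \in edges g, f \in edges g, e :&: f = set0 & p = [set e; f]])
          (p \in Qpairs g).
Proof.
rewrite inE; apply: (iffP existsP) => [[e /andP[Ee /existsP[f]]]|[e [f [Ee Ef ef0 ->]]]].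
  by case/and3P=> Ef /eqP ef0 /eqP ->; exists e, f.
by exists e; rewrite Ee; apply/existsP; exists f; rewrite Ef ef0 !eqxx.
Qed.

Lemma adj_neq s t : g s t -> s != t.
Proof. by apply: contraTneq => ->; rewrite girr. Qed.

Lemma edge_sum_set2 s t : g s t -> edge_sum g [set s; t] = deg g s + deg g t.
Proof. by move=> gst; rewrite /edge_sum big_setU1 ?big_set1 // in_set1 adj_neq. Qed.

Lemma card_incident_edges s : #|incident_edges s| = deg g s.
Proof.
have -> : incident_edges s = (fun y => [set s; y]) @: [set y | g s y].
  apply/setP => e; rewrite inE; apply/andP/imsetP.
    case=> /edgeP[a [b [gab ->]]] /set2P[->|->]; first by exists b; rewrite ?inE.
    by exists a; rewrite ?inE 1?gsym // setUC.
  by case=> y; rewrite inE => gsy ->; split; [apply/edgeP; exists s, y | apply: set21].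
rewrite card_in_imset // => y z; rewrite !inE => gsy _ syz.
have : y \in [set s; z] by rewrite -syz set22.
by case/set2P => // ys; move: gsy; rewrite ys girr.
Qed.

Lemma incident_edgesI s t :
  g s t -> incident_edges s :&: incident_edges t = [set [set s; t]].
Proof.
move=> gst; have Est : [set s; t] \in edges g by apply/edgeP; exists s, t.
apply/setP => e; rewrite in_set1; apply/setIP/eqP => [|->].
  case=> /setIdP[/edgeP[a [b [_ ->]]] sab] /setIdP[_ tab].
  have st := adj_neq gst.
  by case/set2P: sab tab st => -> /set2P[] ->; rewrite ?eqxx // setUC.
by split; apply/setIdP; rewrite ?set21 ?set22.
Qed.

Lemma edges_meeting_set2 s t :
  edges g :\: disjoint_edges [set s; t] = incident_edges s :|: incident_edges t.
Proof.
apply/setP => e; rewrite in_setD in_setU [e \in disjoint_edges _]inE.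
rewrite ![e \in incident_edges _]inE; case: (e \in edges g); rewrite ?andbF ?andbT //=.
apply/set0Pn/orP => [[x /setIP[/set2P[]-> ]]|[se|te]]; [by left|by right| |].
- by exists s; rewrite !inE eqxx.
- by exists t; rewrite !inE eqxx orbT.
Qed.

Lemma card_disjoint_edges e :
  e \in edges g -> #|disjoint_edges e| + edge_sum g e = nedges g + 1.
Proof.
case/edgeP=> s [t [gst ->]]; rewrite edge_sum_set2 //.
have := cardsUI (incident_edges s) (incident_edges t).
rewrite -edges_meeting_set2 incident_edgesI // cards1 !card_incident_edges => <-.
have disjE : edges g :&: disjoint_edges [set s; t] = disjoint_edges [set s; t].
  by apply/setIidPr/subsetP => f; rewrite inE => /andP[].
by rewrite /nedges -(cardsID (disjoint_edges [set s; t]) (edges g)) disjE addnA.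
Qed.

Lemma card_Qpairs_containing e :
  e \in edges g -> #|[set p in Qpairs g | e \in p]| = #|disjoint_edges e|.
Proof.
move=> Ee; have [x ex] : exists x, x \in e.
  by case/edgeP: Ee => s [t [_ ->]]; exists s; apply: set21.
have -> : [set p in Qpairs g | e \in p] = (fun f => [set e; f]) @: disjoint_edges e.
  apply/setP => p; rewrite inE; apply/andP/imsetP.
    case=> /QpairsP[a [b [Ea Eb ab0 ->]]] /set2P[->|->].
      by exists b; rewrite // inE Eb ab0 eqxx.
    by exists a; rewrite 1?setUC // inE Ea setIC ab0 eqxx.
  case=> f; rewrite inE => /andP[Ef /eqP ef0] ->; split; last exact: set21.
  by apply/QpairsP; exists e, f.
rewrite card_in_imset // => f h; rewrite !inE => /andP[_ /eqP ef0] _ efh.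
have : f \in [set e; h] by rewrite -efh set22.
by case/set2P => // fe; move: ef0; rewrite fe setIid => e0; rewrite e0 inE in ex.
Qed.

Lemma Qpairs_sub_edges p : p \in Qpairs g -> p \subset edges g.
Proof. by case/QpairsP=> e [f [Ee Ef _ ->]]; rewrite subUset !sub1set Ee Ef. Qed.

Lemma Phi1_by_edges :
  Phi1 g = \sum_(e in edges g) #|disjoint_edges e| * edge_prod g e.
Proof.
rewrite /Phi1 (sum_over_family_members _ Qpairs_sub_edges).
by apply: eq_bigr => e Ee; rewrite card_Qpairs_containing.
Qed.

Lemma Phi1_add_weighted_sum :
  Phi1 g + \sum_(e in edges g) edge_prod g e * edge_sum g e = (nedges g + 1) * psi g.
Proof.
rewrite Phi1_by_edges -big_split /psi big_distrr /=.
by apply: eq_bigr => e Ee; rewrite mulnC -mulnDr card_disjoint_edges // mulnC.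
Qed.

End Counting.

Import GRing.Theory.
Local Open Scope ring_scope.

Theorem proposition7 (T : finType) (g : rel T) (gsym : symmetric g)
    (girr : irreflexive g) :
  (Phi1 g)%:Z =
    ((nedges g + 1) * psi g)%:Z
    - (\sum_(e in edges g) edge_prod g e * edge_sum g e)%N%:Z.
Proof. by rewrite -(Phi1_add_weighted_sum gsym girr) PoszD addrK. Qed.
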